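(* Let $\chi:T\to\overline{\mathbf F}_p^\times$ be a smooth character with $\chi\neq\chi^s$, and let $\pi'$ be a smooth representation of $G$. Then every non-zero $\phi\in\mathrm{Hom}_P(\mathrm{Ind}_P^G\chi,\pi')$ is injective.
   Context: $F$ non-Archimedean local field of residual characteristic $p$, $G=\mathrm{GL}_2(F)$, $P$ the upper triangular Borel subgroup, $U$ its unipotent radical, $T$ the diagonal torus; characters of $T$ are viewed as characters of $P$ via $P\to P/U\cong T$. $\chi^s(\mathrm{diag}(a,d))=\chi(\mathrm{diag}(d,a))$. $\mathrm{Ind}_P^G\chi$ is the space of locally constant $f:G\to\overline{\mathbf F}_p$ with $f(bg)=\chi(b)f(g)$ for $b\in P$, with $G$ acting by right translation. Representations are smooth on $\overline{\mathbf F}_p$-vector spaces. *)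

From HB Require Import structures.
From mathcomp Require Import all_boot all_order all_algebra.
Set Implicit Arguments. Unset Strict Implicit. Unset Printing Implicit Defensive.
Import Order.TTheory GRing.Theory Num.Theory.
Local Open Scope ring_scope.

(* Non-Archimedean local fields, presented via a normalized discrete    *)
(* valuation v : F^x -> Z (the value of v at 0 is irrelevant).          *)

(* x lies in the fractional ideal varpi^n O_F *)
Definition inPow (F : fieldType) (v : F -> int) (n : int) (x : F) : Prop :=
  x = 0 \/ n <= v x.

(* F is a non-Archimedean local field of residual characteristic p,
   with normalized discrete valuation v: v is a surjective valuation onto Z,
   F is complete for it, and the residue field O/m is finite of characteristic p. *)
Record nonarch_local_field (F : fieldType) (p : nat) (v : F -> int) : Prop := {
  nalf_prime : prime p;
  nalf_mul : forall x y, x != 0 -> y != 0 -> v (x * y) = v x + v y;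
  nalf_add : forall x y, x != 0 -> y != 0 -> x + y != 0 ->
                Num.min (v x) (v y) <= v (x + y);
  nalf_unif : exists w : F, w != 0 /\ v w = 1;
  nalf_complete : forall u : nat -> F,
      (forall N : nat, exists M : nat, forall m n : nat, (M <= m)%N -> (M <= n)%N ->
          inPow v N%:Z (u m - u n)) ->
      exists l : F, forall N : nat, exists M : nat, forall n : nat, (M <= n)%N ->
          inPow v N%:Z (u n - l);
  nalf_residue_finite : exists s : seq F, forall x : F, inPow v 0 x ->
      exists2 r, r \in s & inPow v 0 r /\ inPow v 1 (x - r);
  nalf_residue_char : inPow v 1 (p%:R : F)
}.

(* An algebraic closure of F_p: algebraically closed of characteristic p
   and algebraic over F_p (every element lies in a finite subfield). *)
Definition is_alg_closure_Fp (k : closedFieldType) (p : nat) : Prop :=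
  p \in [pchar k] /\ forall x : k, exists2 n : nat, (0 < n)%N & x ^+ (p ^ n) = x.

Definition GL2 (F : fieldType) := {M : 'M[F]_2 | M \in unitmx}.

Lemma GL2_mul_proof (F : fieldType) (g h : GL2 F) : val g *m val h \in unitmx.
Proof. by rewrite unitmx_mul (valP g) (valP h). Qed.

Definition GL2_mul (F : fieldType) (g h : GL2 F) : GL2 F :=
  exist _ (val g *m val h) (GL2_mul_proof g h).

Lemma GL2_one_proof (F : fieldType) : (1%:M : 'M[F]_2) \in unitmx.
Proof. exact: unitmx1. Qed.

Definition GL2_one (F : fieldType) : GL2 F := exist _ 1%:M (GL2_one_proof F).

Definition inBorel (F : fieldType) (b : GL2 F) : Prop := val b ord_max ord0 = 0.

(* principal congruence subgroup K_{n+1} = 1 + varpi^{n+1} M_2(O_F);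
   these form a basis of open neighbourhoods of 1 in G *)
Definition inCongr (F : fieldType) (v : F -> int) (n : nat) (h : GL2 F) : Prop :=
  forall i j : 'I_2, inPow v (n.+1)%:Z ((val h - 1%:M) i j).

Definition loc_const (F : fieldType) (v : F -> int) (T : Type) (f : GL2 F -> T) : Prop :=
  forall g, exists n : nat, forall h, inCongr v n h -> f (GL2_mul g h) = f g.

(* Smooth characters of T; chi a d := chi(diag(a,d)) for a,d in F^x     *)
Definition smooth_char (F : fieldType) (v : F -> int) (k : fieldType)
    (chi : F -> F -> k) : Prop :=
  [/\ forall a d, a != 0 -> d != 0 -> chi a d != 0,
      forall a d a' d', a != 0 -> d != 0 -> a' != 0 -> d' != 0 ->
          chi (a * a') (d * d') = chi a d * chi a' d' &
      exists n : nat, forall a d, a != 0 -> d != 0 ->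
          inPow v (n.+1)%:Z (a - 1) -> inPow v (n.+1)%:Z (d - 1) -> chi a d = 1].

(* chi <> chi^s, where chi^s(diag(a,d)) = chi(diag(d,a)) *)
Definition char_ne_swap (F : fieldType) (k : fieldType) (chi : F -> F -> k) : Prop :=
  exists a d, [/\ a != 0, d != 0 & chi a d != chi d a].

(* chi viewed as a character of P via P -> P/U = T *)
Definition charP (F : fieldType) (k : fieldType) (chi : F -> F -> k) (b : GL2 F) : k :=
  chi (val b ord0 ord0) (val b ord_max ord_max).

(* Ind_P^G chi as a subspace of functions G -> k *)
Definition in_Ind (F : fieldType) (v : F -> int) (k : fieldType) (chi : F -> F -> k)
    (f : GL2 F -> k) : Prop :=
  loc_const v f /\
  forall b g, inBorel b -> f (GL2_mul b g) = charP chi b * f g.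

Definition rtrans (F : fieldType) (k : Type) (g : GL2 F) (f : GL2 F -> k) : GL2 F -> k :=
  fun x => f (GL2_mul x g).

Definition smooth_rep (F : fieldType) (v : F -> int) (k : fieldType) (V : lmodType k)
    (rho : GL2 F -> V -> V) : Prop :=
  [/\ forall g (a : k) (x y : V), rho g (a *: x + y) = a *: rho g x + rho g y,
      forall x, rho (GL2_one F) x = x,
      forall g h x, rho (GL2_mul g h) x = rho g (rho h x) &
      forall x, exists n : nat, forall h, inCongr v n h -> rho h x = x].

(* phi in Hom_P(Ind_P^G chi, pi'): phi is a k-linear map defined on Ind_P^G chi
   (its values outside are irrelevant) commuting with the action of P *)
Definition is_HomP (F : fieldType) (v : F -> int) (k : fieldType) (chi : F -> F -> k)
    (V : lmodType k) (rho : GL2 F -> V -> V) (phi : (GL2 F -> k) -> V) : Prop :=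
  (forall (a : k) f1 f2, in_Ind v chi f1 -> in_Ind v chi f2 ->
      phi (fun x => a * f1 x + f2 x) = a *: phi f1 + phi f2) /\
  (forall b f, inBorel b -> in_Ind v chi f -> phi (rtrans b f) = rho b (phi f)).

(* Let K be the kernel of phi, a P-stable subspace of Ind chi, and suppose K <> 0.
   First, K contains a non-zero f with f(1) = 0: otherwise some non-zero element of K
   would also be a right P-eigenfunction, which chi <> chi^s forbids.  By the Bruhat
   decomposition such an f is determined by x |-> f(w n(x)), a compactly supported,
   locally constant function on F.  In characteristic p the p-th power of the difference
   operator f |-> f(. n(u)) - f is translation by p u minus 1, and p u lies deeper than u,
   so repeated differencing lowers the level of local constancy until K contains the
   indicator of a ball; its torus and unipotent translates give all balls, so K contains
   every f with f(1) = 0.  Then phi factors through evaluation at 1, and its image is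
   spanned by a P-eigenvector of character chi.  Smoothness makes that vector fixed by
   the lower unipotents, hence by w, which conjugates chi into chi^s; so it is 0 and
   phi = 0, contradicting phi <> 0. *)

From Stdlib Require Import Classical ClassicalEpsilon FunctionalExtensionality.
From HB Require Import structures.
From mathcomp Require Import all_boot all_order all_algebra.
From mathcomp Require Import zify ring.
Set Implicit Arguments. Unset Strict Implicit. Unset Printing Implicit Defensive.
Import Order.TTheory GRing.Theory Num.Theory.
Local Open Scope ring_scope.

Lemma dependent_choice (T : Type) (Q : nat -> T -> Prop) (R : nat -> T -> T -> Prop) a0 :
  Q 0%N a0 -> (forall n a, Q n a -> exists a', Q n.+1 a' /\ R n a a') ->
  exists u : nat -> T, forall n, Q n (u n) /\ R n (u n) (u n.+1).
Proof.
move=> Q0 QS.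
pose next n a := epsilon (inhabits a0) (fun a' => Q n.+1 a' /\ R n a a').
pose fix u n := if n is n'.+1 then next n' (u n') else a0.
have Qu n : Q n (u n).
  by elim: n => [//|n IH]; exact: (epsilon_spec _ _ (QS n _ IH)).1.
by exists u => n; split=> //; exact: (epsilon_spec _ _ (QS n _ (Qu n))).2.
Qed.

Lemma uniform_bound (T : eqType) (L : seq T) (P : T -> int -> Prop) :
  (forall z m m', m <= m' -> P z m -> P z m') ->
  (forall z, z \in L -> exists m, P z m) -> exists m, forall z, z \in L -> P z m.
Proof.
move=> Pmono; elim: L => [|a L IH] PL; first by exists 0.
have [m1 Pa] := PL a (mem_head _ _).
have [m2 PL'] : exists m, forall z, z \in L -> P z m.
  by apply: IH => z zL; apply: PL; rewrite in_cons zL orbT.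
exists (Num.max m1 m2) => z; rewrite in_cons => /orP[/eqP->|zL].
  by apply: Pmono Pa; rewrite le_max lexx.
by apply: Pmono (PL' _ zL); rewrite le_max lexx orbT.
Qed.

Lemma exists_last (P : nat -> Prop) N : P 0%N -> ~ P N -> exists n, P n /\ ~ P n.+1.
Proof.
move=> P0; elim: N => [//|N IH] PN.
by case: (classic (P N)) => [PN'|/IH//]; exists N.
Qed.

Lemma sum_if_const (V : nmodType) (T : Type) (L : seq T) (P : pred T) (c : V) :
  \sum_(z <- L) (if P z then c else 0) = c *+ count P L.
Proof.
elim: L => [|a L IH]; first by rewrite big_nil.
by rewrite big_cons IH /= mulrnDr; case: (P a); rewrite ?add0r.
Qed.

Section LocalField.
Variables (p : nat) (F : fieldType) (v : F -> int).
Hypothesis hF : nonarch_local_field p v.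

Definition inPowb (n : int) (x : F) : bool := (x == 0) || (n <= v x).

Lemma inPowP n x : reflect (inPow v n x) (inPowb n x).
Proof. by apply: (iffP orP) => -[/eqP|]; by [left|right]. Qed.

Lemma vM x y : x != 0 -> y != 0 -> v (x * y) = v x + v y.
Proof. by move=> x0 y0; apply: (nalf_mul hF x0 y0). Qed.

Lemma v1 : v 1 = 0.
Proof.
have := vM (oner_neq0 F) (oner_neq0 F); rewrite mulr1.
by set a := v 1 => ?; lia.
Qed.

Lemma vN x : x != 0 -> v (- x) = v x.
Proof.
have N1 : (-1 : F) != 0 by rewrite oppr_eq0 oner_neq0.
have vN1 : v (-1) = 0 by have := vM N1 N1; rewrite mulrNN mulr1 v1; lia.
by move=> x0; rewrite -mulN1r vM // vN1 add0r.
Qed.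

Lemma vV x : x != 0 -> v x^-1 = - v x.
Proof.
by move=> x0; have := vM x0 (invr_neq0 x0); rewrite mulfV // v1; lia.
Qed.

Lemma ex_val (m : int) : exists d : F, d != 0 /\ v d = m.
Proof.
have [w [w0 vw]] := nalf_unif hF.
have vwn (n : nat) : w ^+ n != 0 /\ v (w ^+ n) = n%:Z.
  elim: n => [|n [wn0 vwn]]; first by rewrite expr0 oner_neq0 v1.
  by rewrite exprS mulf_neq0 // vM // vwn vw; split=> //; lia.
case: m => n; first by exists (w ^+ n).
have [wn0 vwn'] := vwn n.+1; exists (w ^+ n.+1)^-1.
by rewrite invr_eq0 vV // vwn' NegzE; split=> //; lia.
Qed.

Lemma inPowb0 n : inPowb n 0.
Proof. by rewrite /inPowb eqxx. Qed.

Lemma inPowb_v x : inPowb (v x) x.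
Proof. by rewrite /inPowb lexx orbT. Qed.

Lemma inPowb_le m n x : m <= n -> inPowb n x -> inPowb m x.
Proof. by rewrite /inPowb => mn /orP[->//|nx]; apply/orP; right; lia. Qed.

Lemma inPowbD n x y : inPowb n x -> inPowb n y -> inPowb n (x + y).
Proof.
rewrite /inPowb; have [->|x0] := eqVneq x 0; first by rewrite add0r.
have [->|y0] := eqVneq y 0; first by rewrite addr0 (negPf x0).
have [->|xy0] := eqVneq (x + y) 0 => //= nx ny.
have := nalf_add hF x0 y0 xy0; rewrite /Num.min.
by set a := v x; set b := v y; set c := v (x + y); case: ifP; lia.
Qed.

Lemma inPowbN n x : inPowb n (- x) = inPowb n x.
Proof. by rewrite /inPowb oppr_eq0; have [//|x0] := eqVneq x 0; rewrite vN. Qed.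

Lemma inPowbB n x y : inPowb n x -> inPowb n y -> inPowb n (x - y).
Proof. by move=> nx ny; rewrite inPowbD ?inPowbN. Qed.

Lemma inPowb_subC n x y : inPowb n (x - y) = inPowb n (y - x).
Proof. by rewrite -inPowbN opprB. Qed.

Lemma inPowb_sub_trans n x y z :
  inPowb n (x - y) -> inPowb n (y - z) -> inPowb n (x - z).
Proof. by move=> xy yz; rewrite -(subrKA y); apply: inPowbD. Qed.

Lemma inPowbM m n x y : inPowb m x -> inPowb n y -> inPowb (m + n) (x * y).
Proof.
rewrite /inPowb; have [->|x0] := eqVneq x 0; first by rewrite mul0r eqxx.
have [->|y0] := eqVneq y 0; first by rewrite mulr0 eqxx.
by rewrite /= mulf_eq0 (negPf x0) (negPf y0) /= vM //; lia.
Qed.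

Lemma inPowb_mulr n d x : d != 0 -> inPowb (n + v d) (x * d) = inPowb n x.
Proof.
move=> d0; rewrite /inPowb mulf_eq0 (negPf d0) orbF.
by have [//|x0] := eqVneq x 0; rewrite /= vM //; apply/idP/idP; lia.
Qed.

Lemma not_inPowb_lt n x : x != 0 -> ~~ inPowb n x -> v x < n.
Proof. by rewrite /inPowb => /negPf -> /=; lia. Qed.

Lemma residue_cover (n : int) : exists L : seq F,
  (forall z, z \in L -> inPowb n z) /\
  forall x, inPowb n x -> exists2 z, z \in L & inPowb (n + 1) (x - z).
Proof.
have [s hs] := nalf_residue_finite hF.
have [d [d0 vd]] := ex_val n.
exists [seq d * r | r <- s & inPowb 0 r]; split.
  move=> z /mapP[r]; rewrite mem_filter => /andP[r0 _] ->.
  by rewrite mulrC -[n]add0r -vd inPowb_mulr.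
move=> x nx.
have /hs[r rs [/inPowP r0 /inPowP xr]] : inPow v 0 (x / d).
  by apply/inPowP; rewrite -(inPowb_mulr _ _ d0) add0r vd mulrVK ?unitfE.
exists (d * r); first by apply/mapP; exists r; rewrite // mem_filter r0.
have -> : x - d * r = (x / d - r) * d by field.
by rewrite addrC -vd inPowb_mulr.
Qed.

Lemma steps_cauchy (j : int) (u : nat -> F) :
  (forall n, inPowb (j + n%:Z) (u n.+1 - u n)) ->
  forall n m, (n <= m)%N -> inPowb (j + n%:Z) (u m - u n).
Proof.
move=> step n; elim=> [|m IH]; first by rewrite leqn0 => /eqP->; rewrite subrr inPowb0.
rewrite leq_eqVlt => /orP[/eqP<-|nm]; first by rewrite subrr inPowb0.
rewrite -(subrKA (u m)); apply: inPowbD; last exact: IH.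
by apply: inPowb_le (step m); lia.
Qed.

Lemma steps_limit (j : int) (u : nat -> F) :
  (forall n, inPowb (j + n%:Z) (u n.+1 - u n)) ->
  exists l, forall n, inPowb (j + n%:Z) (u n - l).
Proof.
move=> step; have cau := steps_cauchy step.
have [l ul] : exists l, forall N : nat, exists M : nat, forall n, (M <= n)%N ->
    inPow v N%:Z (u n - l).
  apply: (nalf_complete hF) => N; exists (absz (N%:Z - j)) => m n Mm Mn; apply/inPowP.
  have [nm|mn] := leqP n m; first by apply: inPowb_le (cau _ _ nm); lia.
  by rewrite inPowb_subC; apply: inPowb_le (cau _ _ (ltnW mn)); lia.
exists l => n; have [M /(_ (maxn M n)) /(_ (leq_maxl _ _)) /inPowP Ml] := ul (absz (j + n%:Z)).
rewrite -(subrKA (u (maxn M n))) inPowbD //.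
  by rewrite inPowb_subC cau ?leq_maxr.
by apply: inPowb_le Ml; lia.
Qed.

Section UniformLocalConstancy.
Variables (T : Type) (f : F -> T).
Hypothesis f_loc : forall x, exists n : int, forall y, inPowb n y -> f (x + y) = f x.

Definition unif_loc_const_at (a : F) (i : int) :=
  exists m : int, forall x y, inPowb i (x - a) -> inPowb m y -> f (x + y) = f x.

Lemma unif_loc_const_cover a i : ~ unif_loc_const_at a i ->
  exists a', ~ unif_loc_const_at a' (i + 1) /\ inPowb i (a' - a).
Proof.
move=> not_at; have [L [Li Lcover]] := residue_cover i.
apply: NNPP => none; apply: not_at.
have L_at z : z \in L -> unif_loc_const_at (a + z) (i + 1).
  move=> zL; apply: NNPP => not_at'; apply: none; exists (a + z); split=> //.
  by rewrite addrC addKr Li.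
pose P z m := forall x y, inPowb (i + 1) (x - (a + z)) -> inPowb m y -> f (x + y) = f x.
have Pmono z m m' : m <= m' -> P z m -> P z m'.
  by move=> mm' Pm x y xz ym'; apply: Pm xz _; apply: inPowb_le ym'.
have [m Lm] := uniform_bound Pmono L_at.
exists m => x y xa ym; have [z zL xz] := Lcover _ xa.
by apply: (Lm z zL) ym; rewrite opprD addrA.
Qed.

(* Compactness of varpi^j O: a failure of uniformity propagates to a nested sequence of
   balls, and local constancy at its limit point gives a contradiction. *)
Lemma unif_loc_const (j : int) :
  exists m : int, forall x y, inPowb j x -> inPowb m y -> f (x + y) = f x.
Proof.
apply: NNPP => not_unif.
have not_at0 : ~ unif_loc_const_at 0 j.
  by case=> m hm; apply: not_unif; exists m => x y jx my; apply: hm; rewrite ?subr0.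
have [u u_bad] : exists u : nat -> F, forall n,
    ~ unif_loc_const_at (u n) (j + n%:Z) /\ inPowb (j + n%:Z) (u n.+1 - u n).
  apply: (@dependent_choice F (fun n a => ~ unif_loc_const_at a (j + n%:Z))
    (fun n a a' => inPowb (j + n%:Z) (a' - a)) 0); first by rewrite addr0.
  move=> n a /unif_loc_const_cover[a' a'_bad]; exists a'.
  by have -> : j + n.+1%:Z = j + n%:Z + 1 by lia.
have [l ul] := steps_limit (fun n => (u_bad n).2).
have [n0 n0l] := f_loc l; pose n := absz (n0 - j).
apply: (u_bad n).1; exists n0 => x y xun y0.
have xl : inPowb n0 (x - l).
  by rewrite -(subrKA (u n)); apply: inPowb_le (inPowbD xun (ul n)); lia.
have -> : x + y = l + (x - l + y) by ring.
rewrite n0l; last exact: inPowbD.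
by have := n0l _ xl; rewrite addrC subrK => <-.
Qed.

End UniformLocalConstancy.

Fixpoint dedup_mod (i : int) (l : seq F) : seq F :=
  if l is r :: l' then r :: [seq r' <- dedup_mod i l' | ~~ inPowb i (r' - r)] else [::].

Lemma mem_dedup_mod i l z : z \in dedup_mod i l -> z \in l.
Proof.
elim: l => [//|r l IH] /=; rewrite !in_cons => /orP[->//|].
by rewrite mem_filter => /andP[_ /IH->]; rewrite orbT.
Qed.

Lemma count_dedup_mod i l y :
  count (fun r => inPowb i (y - r)) (dedup_mod i l) = has (fun r => inPowb i (y - r)) l.
Proof.
elim: l => [//|r l IH] /=; rewrite count_filter.
case yr : (inPowb i (y - r)) => /=.
  rewrite add1n; congr S; apply/eqP; rewrite -leqn0 leqNgt -has_count.
  apply/hasP => -[r' _ /= /andP[yr' /negP]]; apply.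
  by rewrite inPowb_subC in yr'; apply: inPowb_sub_trans yr' yr.
rewrite add0n -IH; apply: eq_count => r' /=.
case yr' : (inPowb i (y - r')) => //=; apply/negP => r'r; move/negP: yr; apply.
exact: inPowb_sub_trans yr' r'r.
Qed.

Lemma residue_system (j : int) (k : nat) : exists L : seq F,
  (forall z, z \in L -> inPowb j z) /\
  forall x, inPowb j x -> count (fun z => inPowb (j + k%:Z) (x - z)) L = 1%N.
Proof.
elim: k => [|k [L [Lj Lcount]]].
  exists [:: 0]; split; first by move=> z; rewrite inE => /eqP->; apply: inPowb0.
  by move=> x jx /=; rewrite addr0 subr0 jx.
have [R [Rk Rcover]] := residue_cover (j + k%:Z).
pose R' := dedup_mod (j + k%:Z + 1) R.
exists (flatten [seq [seq z + r | r <- R'] | z <- L]); split.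
  move=> _ /flattenP[_ /mapP[z zL ->] /mapP[r /mem_dedup_mod rR ->]].
  by apply: inPowbD; [exact: Lj | apply: inPowb_le (Rk _ rR); lia].
move=> x jx; rewrite -(Lcount _ jx).
have -> : j + k.+1%:Z = j + k%:Z + 1 by lia.
elim: L {Lj Lcount} => [//|z L IH] /=.
rewrite count_cat IH; congr addn; rewrite count_map.
under eq_count => r do rewrite /= opprD addrA.
rewrite count_dedup_mod; case: hasP => [[r rR xzr]|no_r] /=.
  rewrite -(subrK r (x - z)) inPowbD //; last exact: Rk.
  by apply: inPowb_le xzr; lia.
case xz : (inPowb (j + k%:Z) (x - z)) => //; case: no_r.
by have [r rR xzr] := Rcover _ xz; exists r.
Qed.

End LocalField.

Section Matrix2.
Variable F : fieldType.

Definition mx2 (a b c d : F) : 'M[F]_2 :=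
  \matrix_(i, j) if i == ord0 then (if j == ord0 then a else b)
                 else (if j == ord0 then c else d).

Lemma ord2P (i : 'I_2) : i = ord0 \/ i = ord_max.
Proof. by case: i => [[|[|//]] i2]; [left|right]; apply: val_inj. Qed.

Lemma mx2_00 a b c d : mx2 a b c d ord0 ord0 = a. Proof. by rewrite mxE. Qed.
Lemma mx2_01 a b c d : mx2 a b c d ord0 ord_max = b. Proof. by rewrite mxE. Qed.
Lemma mx2_10 a b c d : mx2 a b c d ord_max ord0 = c. Proof. by rewrite mxE. Qed.
Lemma mx2_11 a b c d : mx2 a b c d ord_max ord_max = d. Proof. by rewrite mxE. Qed.
Definition mx2E := (mx2_00, mx2_01, mx2_10, mx2_11).

Lemma mx2_ext (A B : 'M[F]_2) :
  A ord0 ord0 = B ord0 ord0 -> A ord0 ord_max = B ord0 ord_max ->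
  A ord_max ord0 = B ord_max ord0 -> A ord_max ord_max = B ord_max ord_max -> A = B.
Proof.
move=> e00 e01 e10 e11; apply/matrixP => i j.
by case: (ord2P i) => ->; case: (ord2P j) => ->.
Qed.

Lemma mx2_eta (M : 'M[F]_2) :
  M = mx2 (M ord0 ord0) (M ord0 ord_max) (M ord_max ord0) (M ord_max ord_max).
Proof. by apply: mx2_ext; rewrite mx2E. Qed.

Lemma sum_ord2 (f : 'I_2 -> F) : \sum_(i < 2) f i = f ord0 + f ord_max.
Proof. by rewrite !big_ord_recl big_ord0 addr0; congr (_ + f _); apply: val_inj. Qed.

Lemma mx2_mul a b c d a' b' c' d' :
  mx2 a b c d *m mx2 a' b' c' d' =
  mx2 (a * a' + b * c') (a * b' + b * d') (c * a' + d * c') (c * b' + d * d').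
Proof. by apply: mx2_ext; rewrite !mxE sum_ord2 !mx2E. Qed.

Lemma mx2_1 : (1%:M : 'M[F]_2) = mx2 1 0 0 1.
Proof. by apply: mx2_ext; rewrite mx2E !mxE. Qed.

Lemma mx2_sub a b c d a' b' c' d' :
  mx2 a b c d - mx2 a' b' c' d' = mx2 (a - a') (b - b') (c - c') (d - d').
Proof. by apply: mx2_ext; rewrite !mxE. Qed.

Lemma mx2_unit a b c d : a * d - b * c != 0 -> mx2 a b c d \in unitmx.
Proof.
move=> D0; set D := a * d - b * c.
have : mx2 a b c d *m mx2 (d / D) (- b / D) (- c / D) (a / D) = 1%:M.
  by rewrite mx2_mul mx2_1; congr mx2; rewrite /D; field.
by case/mulmx1_unit.
Qed.

Lemma mx2_det_neq0 (M : 'M[F]_2) : M \in unitmx ->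
  M ord0 ord0 * M ord_max ord_max - M ord0 ord_max * M ord_max ord0 != 0.
Proof.
move=> Mu; have := mulmxV Mu; rewrite {1}[M]mx2_eta [invmx M]mx2_eta mx2_mul mx2_1.
set a := M ord0 ord0; set b := M ord0 ord_max; set c := M ord_max ord0.
set d := M ord_max ord_max; set a' := invmx M ord0 ord0; set b' := invmx M ord0 ord_max.
set c' := invmx M ord_max ord0; set d' := invmx M ord_max ord_max.
move/matrixP=> E.
have e00 : a * a' + b * c' = 1 by have := E ord0 ord0; rewrite !mx2E.
have e01 : a * b' + b * d' = 0 by have := E ord0 ord_max; rewrite !mx2E.
have e10 : c * a' + d * c' = 0 by have := E ord_max ord0; rewrite !mx2E.
have e11 : c * b' + d * d' = 1 by have := E ord_max ord_max; rewrite !mx2E.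
have detM : (a * d - b * c) * (a' * d' - b' * c') = 1.
  transitivity ((a * a' + b * c') * (c * b' + d * d') - (a * b' + b * d') * (c * a' + d * c')).
    by ring.
  by rewrite e00 e01 e10 e11 mul1r mul0r subr0.
by apply/eqP => D0; move: detM; rewrite D0 mul0r => /eqP; rewrite eq_sym oner_eq0.
Qed.

Definition gl (M : 'M[F]_2) : GL2 F := insubd (GL2_one F) M.

Lemma glK M : M \in unitmx -> val (gl M) = M.
Proof. by move=> Mu; rewrite /gl insubdK. Qed.

Lemma GL2_mulA (g h l : GL2 F) : GL2_mul g (GL2_mul h l) = GL2_mul (GL2_mul g h) l.
Proof. by apply: val_inj; rewrite /= mulmxA. Qed.

Lemma GL2_mul1g (g : GL2 F) : GL2_mul (GL2_one F) g = g.
Proof. by apply: val_inj; rewrite /= mul1mx. Qed.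

Lemma GL2_mulg1 (g : GL2 F) : GL2_mul g (GL2_one F) = g.
Proof. by apply: val_inj; rewrite /= mulmx1. Qed.

Definition GL2_inv (g : GL2 F) : GL2 F := gl (invmx (val g)).

Lemma val_GL2_inv (g : GL2 F) : val (GL2_inv g) = invmx (val g).
Proof. by rewrite glK // unitmx_inv (valP g). Qed.

Definition upper (y : F) := gl (mx2 1 y 0 1).
Definition lower (c : F) := gl (mx2 1 0 c 1).
Definition diag2 (a d : F) := gl (mx2 a 0 0 d).
Definition borel (a b d : F) := gl (mx2 a b 0 d).
(* wn x = w n(x) with w = antidiag(1, 1); x |-> P wn x parametrises the big cell P\G. *)
Definition wn (x : F) := gl (mx2 0 1 1 x).
Definition weyl := gl (mx2 (0 : F) 1 (-1) 0).

Lemma val_upper y : val (upper y) = mx2 1 y 0 1.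
Proof. by rewrite glK // mx2_unit // mulr1 mulr0 subr0 oner_neq0. Qed.

Lemma val_lower c : val (lower c) = mx2 1 0 c 1.
Proof. by rewrite glK // mx2_unit // mulr1 mul0r subr0 oner_neq0. Qed.

Lemma val_diag2 a d : a != 0 -> d != 0 -> val (diag2 a d) = mx2 a 0 0 d.
Proof. by move=> a0 d0; rewrite glK // mx2_unit // mul0r subr0 mulf_neq0. Qed.

Lemma val_borel a b d : a != 0 -> d != 0 -> val (borel a b d) = mx2 a b 0 d.
Proof. by move=> a0 d0; rewrite glK // mx2_unit // mulr0 subr0 mulf_neq0. Qed.

Lemma val_wn x : val (wn x) = mx2 0 1 1 x.
Proof. by rewrite glK // mx2_unit // mul0r mulr1 sub0r oppr_eq0 oner_neq0. Qed.

Lemma val_weyl : val weyl = mx2 0 1 (-1) 0.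
Proof. by rewrite glK // mx2_unit // mul0r mulrN1 sub0r opprK oner_neq0. Qed.

Lemma inBorel_borel a b d : a != 0 -> d != 0 -> inBorel (borel a b d).
Proof. by move=> a0 d0; rewrite /inBorel val_borel // mx2E. Qed.

Lemma inBorel_diag2 a d : a != 0 -> d != 0 -> inBorel (diag2 a d).
Proof. by move=> a0 d0; rewrite /inBorel val_diag2 // mx2E. Qed.

Lemma inBorel_upper y : inBorel (upper y).
Proof. by rewrite /inBorel val_upper mx2E. Qed.

Lemma bruhat_decomp (g : GL2 F) : val g ord_max ord0 != 0 ->
  let M := val g in let c := M ord_max ord0 in
  let D := M ord0 ord0 * M ord_max ord_max - M ord0 ord_max * c in
  g = GL2_mul (borel (- D / c) (M ord0 ord0) c) (wn (M ord_max ord_max / c)).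
Proof.
move=> c0 M c D; have D0 : D != 0 := mx2_det_neq0 (valP g).
apply: val_inj; rewrite /= val_borel ?val_wn; last first.
- exact: c0.
- by rewrite mulf_neq0 ?oppr_eq0 ?invr_eq0.
by rewrite mx2_mul {1}[val g]mx2_eta -/M -/c; congr mx2; rewrite /D; field.
Qed.

Lemma wn_upper x y : GL2_mul (wn x) (upper y) = wn (x + y).
Proof. by apply: val_inj; rewrite /= !val_wn val_upper mx2_mul; congr mx2; ring. Qed.

Lemma wn_diag2 x a d : a != 0 -> d != 0 ->
  GL2_mul (wn x) (diag2 a d) = GL2_mul (diag2 d a) (wn (x * d / a)).
Proof.
move=> a0 d0; apply: val_inj; rewrite /= !val_wn !val_diag2 // !mx2_mul.
by congr mx2; field.
Qed.

Lemma wn_lower x : x != 0 -> wn x = GL2_mul (borel (- x^-1) 1 x) (lower x^-1).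
Proof.
move=> x0; apply: val_inj; rewrite /= val_wn val_borel ?oppr_eq0 ?invr_eq0 //.
by rewrite val_lower mx2_mul; congr mx2; field.
Qed.

Lemma diag2_lower_conj a d c : a != 0 -> d != 0 ->
  GL2_mul (GL2_mul (diag2 a d) (lower c)) (diag2 a^-1 d^-1) = lower (d * c / a).
Proof.
move=> a0 d0; apply: val_inj; rewrite /= !val_lower !val_diag2 ?invr_eq0 //.
by rewrite !mx2_mul; congr mx2; field.
Qed.

Lemma weyl_decomp : weyl = GL2_mul (GL2_mul (upper 1) (lower (-1))) (upper 1).
Proof.
by apply: val_inj; rewrite /= val_weyl !val_upper val_lower !mx2_mul; congr mx2; ring.
Qed.

Lemma weyl_diag2 a d : a != 0 -> d != 0 ->
  GL2_mul weyl (diag2 a d) = GL2_mul (diag2 d a) weyl.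
Proof.
by move=> a0 d0; apply: val_inj; rewrite /= val_weyl !val_diag2 // !mx2_mul; congr mx2; ring.
Qed.

End Matrix2.

Arguments weyl {F}.

Section FiniteDifferences.
Variable R : comNzRingType.

Definition fdiff (a : nat -> R) : nat -> R := fun i => a i.+1 - a i.

Lemma iter_fdiff n a i : iter n fdiff a i =
  \sum_(0 <= j < n.+1) ((-1) ^+ (n + j) * 'C(n, j)%:R) * a (i + j)%N.
Proof.
elim: n a i => [|n IH] a i; first by rewrite big_nat1 /= mul1r mul1r addn0.
rewrite iterSr IH /fdiff (big_nat_recl n.+1) // bin0 mulr1 addn0.
under eq_bigr => j _ do rewrite binS natrD mulrDr mulrDl.
rewrite big_split /=.
pose X j := (-1 : R) ^+ (n + j) * 'C(n, j.+1)%:R * a (i + j.+1)%N.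
pose Y j := (-1 : R) ^+ (n + j) * 'C(n, j)%:R * a (i + j.+1)%N.
have e1 : \sum_(0 <= j < n.+1) (-1) ^+ (n + j) * 'C(n, j)%:R * (a (i + j).+1 - a (i + j)%N) =
    \sum_(0 <= j < n.+1) Y j - \sum_(0 <= j < n.+1) (-1) ^+ (n + j) * 'C(n, j)%:R * a (i + j)%N.
  by rewrite -sumrB; apply: eq_bigr => j _; rewrite /Y addnS; ring.
have e2 : \sum_(0 <= j < n.+1) (-1) ^+ (n + j) * 'C(n, j)%:R * a (i + j)%N =
    (-1) ^+ n * a i - \sum_(0 <= j < n) X j.
  rewrite big_nat_recl // bin0 !addn0 mulr1 -sumrN; congr (_ + _).
  by apply: eq_bigr => j _; rewrite /X addnS exprS; ring.
have e3 : \sum_(0 <= j < n.+1) (-1) ^+ (n.+1 + j.+1) * 'C(n, j.+1)%:R * a (i + j.+1)%N =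
    \sum_(0 <= j < n) X j.
  rewrite big_nat_recr //= bin_small // mulr0 mul0r addr0.
  by apply: eq_bigr => j _; rewrite /X addSn addnS !exprS; ring.
have e4 : \sum_(0 <= j < n.+1) (-1) ^+ (n.+1 + j.+1) * 'C(n, j)%:R * a (i + j.+1)%N =
    \sum_(0 <= j < n.+1) Y j.
  by apply: eq_bigr => j _; rewrite /Y addSn addnS !exprS; ring.
by rewrite e1 e2 e3 e4 addn0 exprS; ring.
Qed.

Lemma signr_pchar p : p \in [pchar R] -> (-1 : R) ^+ p = -1.
Proof.
move=> pR; have [p2|p_odd] := even_prime (pcharf_prime pR); last first.
  by rewrite -signr_odd p_odd.
rewrite p2 expr2 mulrNN mulr1; apply/eqP; rewrite -subr_eq0 opprK; apply/eqP.
by have := pcharf0 pR; rewrite p2.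
Qed.

Lemma iter_fdiff_pchar p a : p \in [pchar R] -> iter p fdiff a 0%N = a p - a 0%N.
Proof.
move=> pR; rewrite iter_fdiff; case: p pR => [/pcharf_prime//|p] pR.
rewrite big_nat_recl // big_nat_recr //= big1_seq; last first.
  move=> j; rewrite mem_index_iota => /andP[_ jp].
  by rewrite bin_lt_pcharf_0 ?mulr0 ?mul0r // ltnS jp.
rewrite add0r bin0 binn !mulr1 add0n addn0 exprD signr_pchar //.
by rewrite mulrNN !mul1r mulN1r addrC.
Qed.

End FiniteDifferences.

Section Congruence.
Variables (p : nat) (F : fieldType) (v : F -> int).
Hypothesis hF : nonarch_local_field p v.
Local Notation inPowb := (inPowb v).

Lemma inCongrP n h :
  inCongr v n h <-> forall i j, inPowb (n.+1)%:Z ((val h - 1%:M) i j).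
Proof. by split=> hn i j; apply/inPowP; apply: hn. Qed.

Lemma inCongr_le m n h : (m <= n)%N -> inCongr v n h -> inCongr v m h.
Proof.
by move=> mn /inCongrP hn; apply/inCongrP => i j; apply: inPowb_le (hn i j); lia.
Qed.

Lemma inCongr_lower n c : inPowb (n.+1)%:Z c -> inCongr v n (lower c).
Proof.
move=> nc; apply/inCongrP => i j; rewrite val_lower mx2_1 mx2_sub.
by case: (ord2P i) => ->; case: (ord2P j) => ->; rewrite !mx2E ?subrr ?subr0 ?inPowb0.
Qed.

Lemma inCongr_upper n c : inPowb (n.+1)%:Z c -> inCongr v n (upper c).
Proof.
move=> nc; apply/inCongrP => i j; rewrite val_upper mx2_1 mx2_sub.
by case: (ord2P i) => ->; case: (ord2P j) => ->; rewrite !mx2E ?subrr ?subr0 ?inPowb0.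
Qed.

Lemma mx_entry_bound (M : 'M[F]_2) : exists E : nat, forall i j, inPowb (- E%:Z) (M i j).
Proof.
exists (absz (v (M ord0 ord0)) + absz (v (M ord0 ord_max)) + absz (v (M ord_max ord0))
   + absz (v (M ord_max ord_max)))%N => i j.
by case: (ord2P i) => ->; case: (ord2P j) => ->; apply: inPowb_le (inPowb_v _ _); lia.
Qed.

Lemma mulmx_entry_bound m n (A B : 'M[F]_2) : (forall i j, inPowb m (A i j)) ->
  (forall i j, inPowb n (B i j)) -> forall i j, inPowb (m + n) ((A *m B) i j).
Proof. by move=> mA nB i j; rewrite mxE sum_ord2; apply: (inPowbD hF); apply: (inPowbM hF). Qed.

Lemma inCongr_conj (g : GL2 F) (n : nat) : exists m : nat, forall h, inCongr v m h ->
  inCongr v n (GL2_mul (GL2_mul (GL2_inv g) h) g).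
Proof.
have [E1 bound_inv] := mx_entry_bound (invmx (val g)).
have [E2 bound_g] := mx_entry_bound (val g).
exists (n + E1 + E2)%N => h /inCongrP hm; apply/inCongrP => i j.
have -> : val (GL2_mul (GL2_mul (GL2_inv g) h) g) - 1%:M =
    invmx (val g) *m (val h - 1%:M) *m val g.
  by rewrite /= val_GL2_inv mulmxBr mulmxBl mulmx1 mulVmx //; apply: valP.
apply: inPowb_le (mulmx_entry_bound (mulmx_entry_bound bound_inv hm) bound_g i j); lia.
Qed.

End Congruence.

Section Kernel.
Variables (p : nat) (F : fieldType) (v : F -> int) (k : fieldType).
Hypotheses (hF : nonarch_local_field p v) (pk : p \in [pchar k]).
Variable chi : F -> F -> k.
Hypotheses (hchi : smooth_char v chi) (hs : char_ne_swap chi).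
Variables (V : lmodType k) (rho : GL2 F -> V -> V) (phi : (GL2 F -> k) -> V).
Hypotheses (hrho : smooth_rep v rho) (hphi : is_HomP v chi rho phi).

Local Notation inPowb := (inPowb v).
Local Notation Ind := (in_Ind v chi).
Local Notation one := (GL2_one F).

Lemma chi_neq0 a d : a != 0 -> d != 0 -> chi a d != 0.
Proof. by case: hchi => chi0 _ _; apply: chi0. Qed.

Lemma chiM a d a' d' : a != 0 -> d != 0 -> a' != 0 -> d' != 0 ->
  chi (a * a') (d * d') = chi a d * chi a' d'.
Proof. by case: hchi => _ chiM _; apply: chiM. Qed.

Lemma chi11 : chi 1 1 = 1.
Proof.
have one0 := oner_neq0 F; have := chiM one0 one0 one0 one0.
by rewrite mulr1 => e; apply: (mulfI (chi_neq0 one0 one0)); rewrite -e mulr1.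
Qed.

Lemma chiMV a d : a != 0 -> d != 0 -> chi a d * chi a^-1 d^-1 = 1.
Proof. by move=> a0 d0; rewrite -chiM ?invr_eq0 // !mulfV // chi11. Qed.

Lemma charP_borel a b d : a != 0 -> d != 0 -> charP chi (borel a b d) = chi a d.
Proof. by move=> a0 d0; rewrite /charP val_borel // !mx2E. Qed.

Lemma charP_diag2 a d : a != 0 -> d != 0 -> charP chi (diag2 a d) = chi a d.
Proof. by move=> a0 d0; rewrite /charP val_diag2 // !mx2E. Qed.

Lemma charP_upper y : charP chi (upper y) = 1.
Proof. by rewrite /charP val_upper !mx2E chi11. Qed.

Lemma rho_lin g a x y : rho g (a *: x + y) = a *: rho g x + rho g y.
Proof. by case: hrho => lin _ _ _; apply: lin. Qed.

Lemma rho0 g : rho g 0 = 0.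
Proof.
have := rho_lin g 1 0 0; rewrite !scale1r addr0 => e.
by apply: (addrI (rho g 0)); rewrite addr0 -e.
Qed.

Lemma rhoZ g a x : rho g (a *: x) = a *: rho g x.
Proof. by have := rho_lin g a x 0; rewrite !addr0 rho0 addr0. Qed.

Lemma rhoM g h x : rho (GL2_mul g h) x = rho g (rho h x).
Proof. by case: hrho => _ _ hom _; apply: hom. Qed.

Lemma Ind_borel f b : Ind f -> inBorel b -> f b = charP chi b * f one.
Proof. by case=> _ equiv Pb; rewrite -equiv // GL2_mulg1. Qed.

Definition lincomb (a : k) (f1 f2 : GL2 F -> k) : GL2 F -> k := fun x => a * f1 x + f2 x.

Lemma Ind_lincomb a f1 f2 : Ind f1 -> Ind f2 -> Ind (lincomb a f1 f2).
Proof.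
case=> loc1 equiv1 [loc2 equiv2]; split=> [g|b g Pb]; last first.
  by rewrite /lincomb equiv1 // equiv2 //; ring.
have [n1 n1g] := loc1 g; have [n2 n2g] := loc2 g.
exists (maxn n1 n2) => h hn; rewrite /lincomb n1g ?n2g //.
  by apply: inCongr_le hn; apply: leq_maxr.
by apply: inCongr_le hn; apply: leq_maxl.
Qed.

Lemma Ind_rtrans g f : Ind f -> Ind (rtrans g f).
Proof.
case=> loc equiv; split=> [x|b y Pb]; last by rewrite /rtrans -GL2_mulA equiv.
have [n nxg] := loc (GL2_mul x g); have [m conj_m] := inCongr_conj hF g n.
exists m => h hm; rewrite /rtrans -(nxg _ (conj_m _ hm)); congr f.
by apply: val_inj; rewrite /= val_GL2_inv !mulmxA mulmxK //; apply: valP.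
Qed.

Lemma Ind0 : Ind (fun _ => 0).
Proof. by split=> [g|b g _]; [exists 0%N | rewrite mulr0]. Qed.

Lemma Ind_eq0 f : Ind f -> f one = 0 -> (forall x, f (wn x) = 0) -> forall g, f g = 0.
Proof.
move=> If f1 fw g; have [c0|c0] := eqVneq (val g ord_max ord0) 0.
  by rewrite (Ind_borel If) // f1 mulr0.
rewrite (bruhat_decomp c0) /=; case: If => _ ->; rewrite ?fw ?mulr0 //.
apply: inBorel_borel => //; rewrite mulf_neq0 ?oppr_eq0 ?invr_eq0 //.
exact: mx2_det_neq0 (valP g).
Qed.

(* wn x = borel _ _ _ * lower x^-1, and lower x^-1 is close to 1 when x^-1 is small. *)
Lemma Ind_wn_far f : Ind f -> exists N : nat, forall x, x != 0 ->
  inPowb (N.+1)%:Z x^-1 -> f (wn x) = chi (- x^-1) x * f one.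
Proof.
case=> loc equiv; have [N N1] := loc one; exists N => x x0 Nx.
rewrite (wn_lower x0) equiv; last by apply: inBorel_borel; rewrite ?oppr_eq0 ?invr_eq0.
rewrite charP_borel ?oppr_eq0 ?invr_eq0 //; congr (_ * _).
by rewrite -{1}(GL2_mul1g (lower x^-1)) N1 //; apply: inCongr_lower.
Qed.

Lemma Ind_wn_loc_const f : Ind f ->
  forall x, exists n : int, forall y, inPowb n y -> f (wn (x + y)) = f (wn x).
Proof.
case=> loc _ x; have [n nx] := loc (wn x); exists (n.+1)%:Z => y ny.
by rewrite -wn_upper nx //; apply: inCongr_upper.
Qed.

Lemma Ind_wn_compact f : Ind f -> f one = 0 -> exists j m : int, [/\ j <= m,
  forall x, ~~ inPowb j x -> f (wn x) = 0 &
  forall x y, inPowb m y -> f (wn (x + y)) = f (wn x)].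
Proof.
move=> If f1; have [N far] := Ind_wn_far If; pose j := - (N.+1)%:Z.
have supp x : ~~ inPowb j x -> f (wn x) = 0.
  move=> jx; have x0 : x != 0 by apply: contra jx => /eqP->; apply: inPowb0.
  have := not_inPowb_lt x0 jx => vx.
  rewrite far ?f1 ?mulr0 // /inPowb (vV hF) // invr_eq0 (negPf x0) /=; lia.
have [m0 unif] := unif_loc_const hF (Ind_wn_loc_const If) j.
exists j, (Num.max m0 j); split=> //; first by rewrite le_max lexx orbT.
move=> x y my; case jx : (inPowb j x).
  by apply: unif => //; apply: inPowb_le my; rewrite le_max lexx.
rewrite !supp ?jx //; apply/negP => jxy; move/negP: jx; apply.
rewrite -(addrK y x); apply: (inPowbB hF) => //.
by apply: inPowb_le my; rewrite le_max lexx orbT.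
Qed.

Definition in_ker f := Ind f /\ phi f = 0.

Lemma phi_lincomb a f1 f2 : Ind f1 -> Ind f2 -> phi (lincomb a f1 f2) = a *: phi f1 + phi f2.
Proof. by move=> If1 If2; case: hphi => lin _; apply: lin. Qed.

Lemma phi_rtrans b f : inBorel b -> Ind f -> phi (rtrans b f) = rho b (phi f).
Proof. by move=> Pb If; case: hphi => _ equiv; apply: equiv. Qed.

Lemma ker_lincomb a f1 f2 : in_ker f1 -> in_ker f2 -> in_ker (lincomb a f1 f2).
Proof.
case=> If1 phi1 [If2 phi2]; split; first exact: Ind_lincomb.
by rewrite phi_lincomb // phi1 phi2 scaler0 addr0.
Qed.

Lemma ker_rtrans b f : inBorel b -> in_ker f -> in_ker (rtrans b f).
Proof.
by move=> Pb [If phif]; split; [exact: Ind_rtrans | rewrite phi_rtrans // phif rho0].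
Qed.

Lemma ker0 : in_ker (fun _ => 0).
Proof.
split; first exact: Ind0.
have := phi_lincomb 1 Ind0 Ind0; rewrite scale1r.
have -> : lincomb 1 (fun _ => 0) (fun _ => 0) = (fun _ => 0 : k).
  by apply: functional_extensionality => x; rewrite /lincomb mulr0 addr0.
by move=> e; apply: (addrI (phi (fun _ => 0))); rewrite addr0 -e.
Qed.

(* Left and right equivariance at wn 0 are compatible only where chi = chi^s. *)
Lemma right_eigen_at1_eq0 h : Ind h ->
  (forall b, inBorel b -> forall g, h (GL2_mul g b) = charP chi b * h g) -> h one = 0.
Proof.
move=> Ih right_equiv; have [a [d [a0 d0 chi_ad]]] := hs.
have hw0 : h (wn 0) = 0.
  have := right_equiv _ (inBorel_diag2 a0 d0) (wn 0).
  rewrite wn_diag2 // !mul0r; case: Ih => _ -> ; last exact: inBorel_diag2.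
  rewrite !charP_diag2 // => /eqP; rewrite -subr_eq0 -mulrBl mulf_eq0 subr_eq0 eq_sym.
  by rewrite (negPf chi_ad) => /eqP.
have hw x : h (wn x) = 0.
  by rewrite -(add0r x) -wn_upper right_equiv ?hw0 ?mulr0 //; apply: inBorel_upper.
have [N far] := Ind_wn_far Ih; have [d1 [d10 vd1]] := ex_val hF (N.+1)%:Z.
have := far d1^-1; rewrite invrK hw invr_eq0 => /(_ d10); rewrite /inPowb vd1 lexx orbT.
move=> /(_ isT) /esym/eqP; rewrite mulf_eq0 => /orP[|/eqP//].
by rewrite (negPf (chi_neq0 _ _)) ?oppr_eq0 ?invr_eq0.
Qed.

Lemma ker_vanishing_at1 h : in_ker h -> (exists g, h g != 0) ->
  exists h', [/\ in_ker h', h' one = 0 & exists g, h' g != 0].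
Proof.
move=> kh hnz; have Ih : Ind h by case: kh.
have [h1|h1] := eqVneq (h one) 0; first by exists h.
have [[b [Pb [g hb_g]]]|no_b] := classic (exists b, inBorel b /\
    exists g, lincomb (- charP chi b) h (rtrans b h) g != 0).
  exists (lincomb (- charP chi b) h (rtrans b h)); split; last by exists g.
    by apply: ker_lincomb kh (ker_rtrans Pb kh).
  by rewrite /lincomb /rtrans GL2_mul1g (Ind_borel Ih Pb); ring.
suff h1_eq0 : h one = 0 by rewrite h1_eq0 eqxx in h1.
apply: right_eigen_at1_eq0 => // b Pb g; apply/eqP; rewrite -subr_eq0; apply/negPn/negP => hbg.
by apply: no_b; exists b; split=> //; exists g; rewrite /lincomb /rtrans mulNr addrC.
Qed.

Definition Delta (u : F) (g : GL2 F -> k) := lincomb (-1) g (rtrans (upper u) g).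

Lemma Delta_wn u g x : Delta u g (wn x) = g (wn (x + u)) - g (wn x).
Proof. by rewrite /Delta /lincomb /rtrans wn_upper; ring. Qed.

Lemma iter_Delta_wn n u g x i : iter n (Delta u) g (wn (x + u *+ i)) =
  iter n (@fdiff k) (fun j => g (wn (x + u *+ j))) i.
Proof.
elim: n i => [//|n IH] i.
by rewrite iterS Delta_wn iterS /fdiff -!IH -addrA -mulrSr.
Qed.

Definition ker_level (j m : int) g := [/\ in_ker g, g one = 0,
  forall x, ~~ inPowb j x -> g (wn x) = 0 &
  forall x y, inPowb m y -> g (wn (x + y)) = g (wn x)].

Definition ker_level_nz j m g := ker_level j m g /\ exists x, g (wn x) != 0.

Lemma ker_level_Delta j m u g : inPowb j u -> ker_level j m g -> ker_level j m (Delta u g).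
Proof.
move=> ju [kg g1 supp per]; split.
- by apply: ker_lincomb kg (ker_rtrans (inBorel_upper u) kg).
- by case: kg => Ig _; rewrite /Delta /lincomb /rtrans GL2_mul1g
    (Ind_borel Ig (inBorel_upper u)) g1; ring.
- move=> x jx; rewrite Delta_wn !supp ?subrr //; apply/negP => jxu; move/negP: jx; apply.
  by rewrite -(addrK u x); apply: (inPowbB hF).
- by move=> x y my; rewrite !Delta_wn addrAC !(per _ _ my).
Qed.

(* In characteristic p, Delta_u^p = (translation by p u) - 1, and p u is one level deeper. *)
Lemma iter_Delta_pchar j m u g : inPowb m u -> ker_level j (m + 1) g ->
  forall x, iter p (Delta u) g (wn x) = 0.
Proof.
move=> mu [_ _ _ per] x; have := iter_Delta_wn p u g x 0.
rewrite mulr0n addr0 => ->; rewrite iter_fdiff_pchar // mulr0n addr0 per ?subrr //.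
have /inPowP p1 := nalf_residue_char hF.
by rewrite -mulr_natl addrC; apply: (inPowbM hF).
Qed.

Lemma ker_level_periodize j m u (Q : (GL2 F -> k) -> Prop) g : inPowb j u -> inPowb m u ->
  (forall g, ker_level j (m + 1) g -> Q g -> Q (Delta u g)) ->
  ker_level_nz j (m + 1) g -> Q g ->
  exists g', [/\ ker_level_nz j (m + 1) g', Q g' & forall x, g' (wn (x + u)) = g' (wn x)].
Proof.
move=> ju mu QDelta [lg nz] Qg.
have lQ n : ker_level j (m + 1) (iter n (Delta u) g) /\ Q (iter n (Delta u) g).
  by elim: n => [//|n [ln Qn]]; rewrite iterS; split; [apply: ker_level_Delta | apply: QDelta].
have not_p : ~ exists x, iter p (Delta u) g (wn x) != 0.
  by case=> x; rewrite (iter_Delta_pchar mu lg) eqxx.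
have [n [nz_n not_nz_n1]] :=
  exists_last (P := fun n => exists x, iter n (Delta u) g (wn x) != 0) nz not_p.
exists (iter n (Delta u) g); split; [by split; case: (lQ n) | by case: (lQ n) |].
move=> x; apply/eqP; rewrite -subr_eq0 -Delta_wn; apply/negPn/negP => nz_x.
by apply: not_nz_n1; exists x; rewrite iterS.
Qed.

Lemma ker_level_descend j m g : j <= m -> ker_level_nz j (m + 1) g ->
  exists g', ker_level_nz j m g'.
Proof.
move=> jm lg; have [R [Rm Rcover]] := residue_cover hF m.
pose Q (l : seq F) (g : GL2 F -> k) := forall r, r \in l -> forall x, g (wn (x + r)) = g (wn x).
have per_R l : {subset l <= R} -> exists g', ker_level_nz j (m + 1) g' /\ Q l g'.
  elim: l => [|r l IH] lR; first by exists g.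
  have [g1 [lg1 Qg1]] := IH (fun z zl => lR z (mem_behead (s := r :: l) zl)).
  have mr : inPowb m r by apply/Rm/lR/mem_head.
  have QDelta g0 : ker_level j (m + 1) g0 -> Q l g0 -> Q l (Delta r g0).
    by move=> _ Qg0 r0 r0l x; rewrite !Delta_wn addrAC !(Qg0 r0 r0l).
  have [g2 [lg2 Qg2 per_r]] := ker_level_periodize (inPowb_le jm mr) mr QDelta lg1 Qg1.
  by exists g2; split=> // r'; rewrite in_cons => /orP[/eqP->|]; [exact: per_r | exact: Qg2].
have [g' [[[kg' g'1 supp per] nz] QR]] := per_R R (fun r rR => rR).
exists g'; split=> //; split=> // x y my; have [r rR yr] := Rcover _ my.
have -> : x + y = x + r + (y - r) by ring.
by rewrite per // QR.
Qed.

Lemma ker_level_descend_all j (n : nat) g : ker_level_nz j (j + n%:Z) g ->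
  exists g', ker_level_nz j j g'.
Proof.
elim: n g => [g|n IH g]; first by rewrite addr0; exists g.
have -> : j + n.+1%:Z = (j + n%:Z) + 1 by lia.
by move=> /ker_level_descend[|g' /IH//]; lia.
Qed.

Lemma ker_ball_indicator h : in_ker h -> h one = 0 -> (exists g, h g != 0) ->
  exists (j : int) e c, [/\ in_ker e, e one = 0, c != 0 &
    forall x, e (wn x) = if inPowb j x then c else 0].
Proof.
move=> kh h1 [g0 hg0]; have Ih : Ind h by case: kh.
have [j [m [jm supp per]]] := Ind_wn_compact Ih h1.
have nz : exists x, h (wn x) != 0.
  apply: NNPP => no_x; move/eqP: hg0; apply; apply: (Ind_eq0 Ih h1) => x.
  by apply/eqP/negPn/negP => hx; apply: no_x; exists x.
have [g [[kg g1 suppg perg] [x0 gx0]]] : exists g, ker_level_nz j j g.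
  apply: (@ker_level_descend_all j (absz (m - j)) h).
  by have -> : j + (absz (m - j))%:Z = m by lia.
have g_ind x : g (wn x) = if inPowb j x then g (wn 0) else 0.
  by case jx : (inPowb j x); [rewrite -[x]add0r perg | rewrite suppg ?jx].
exists j, g, (g (wn 0)); split=> //.
by move: gx0; rewrite g_ind; case: ifP => // _; rewrite eqxx.
Qed.

(* Right translation by diag2 1 d rescales the ball, and by upper (- z) recentres it. *)
Lemma ker_ball_translate (j : int) e c (l : int) z : in_ker e -> e one = 0 -> c != 0 ->
  (forall x, e (wn x) = if inPowb j x then c else 0) ->
  exists e', [/\ in_ker e', e' one = 0 &
    forall x, e' (wn x) = if inPowb l (x - z) then 1 else 0].
Proof.
move=> ke e1 c0 e_ind; have Ie : Ind e by case: ke.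
have [d [d0 vd]] := ex_val hF (j - l); have one0 := oner_neq0 F.
have Pd : inBorel (diag2 1 d) by apply: inBorel_diag2.
pose e2 := lincomb (c * chi d 1)^-1 (rtrans (diag2 1 d) e) (fun _ => 0).
have ke2 : in_ker e2 by apply: ker_lincomb ker0; apply: ker_rtrans.
have e2_ind x : e2 (wn x) = if inPowb l x then 1 else 0.
  rewrite /e2 /lincomb /rtrans addr0 wn_diag2 //; case: Ie => _ ->; last first.
    exact: inBorel_diag2.
  rewrite charP_diag2 // e_ind divr1 (_ : j = l + v d); last by rewrite vd; lia.
  rewrite (inPowb_mulr hF) //; case: ifP => _; last by rewrite !mulr0.
  by rewrite [chi d 1 * c]mulrC mulVf // mulf_neq0 // chi_neq0.
have Ie2 : Ind e2 by case: ke2.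
exists (rtrans (upper (- z)) e2); split.
- by apply: ker_rtrans => //; apply: inBorel_upper.
- rewrite /rtrans GL2_mul1g (Ind_borel Ie2 (inBorel_upper _)) /e2 /lincomb /rtrans.
  by rewrite GL2_mul1g (Ind_borel Ie Pd) e1 !mulr0 addr0 mulr0.
- by move=> x; rewrite /rtrans wn_upper e2_ind.
Qed.

Lemma ker_step_function (l : int) (a : F -> k) (L : seq F) :
  (forall z, exists e, [/\ in_ker e, e one = 0 &
    forall x, e (wn x) = if inPowb l (x - z) then 1 else 0]) ->
  exists g, [/\ in_ker g, g one = 0 &
    forall x, g (wn x) = \sum_(z <- L) (if inPowb l (x - z) then a z else 0)].
Proof.
move=> balls; elim: L => [|z L [g [kg g1 g_sum]]].
  by exists (fun _ => 0); split=> [||x]; rewrite ?big_nil //; apply: ker0.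
have [e [ke e1 e_ind]] := balls z.
exists (lincomb (a z) e g); split; first exact: ker_lincomb.
  by rewrite /lincomb e1 g1 mulr0 addr0.
by move=> x; rewrite /lincomb e_ind g_sum big_cons; case: ifP; rewrite ?mulr1 ?mulr0.
Qed.

Lemma ker_vanishing (balls : forall (l : int) z, exists e, [/\ in_ker e, e one = 0 &
    forall x, e (wn x) = if inPowb l (x - z) then 1 else 0]) f :
  Ind f -> f one = 0 -> in_ker f.
Proof.
move=> If f1; have [j [m [jm supp per]]] := Ind_wn_compact If f1.
pose l := j + (absz (m - j))%:Z; have ml : m <= l by rewrite /l; lia.
have [L [Lj L1]] := residue_system hF j (absz (m - j)).
have [g [kg g1 g_sum]] := ker_step_function (fun z => f (wn z)) L (balls l).
have fg x : f (wn x) = g (wn x).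
  rewrite g_sum; case jx : (inPowb j x).
    rewrite (eq_bigr (fun z => if inPowb l (x - z) then f (wn x) else 0)).
      by rewrite sum_if_const L1 // mulr1n.
    move=> z _; case: ifP => // xz; rewrite -(subrK z x) addrC per //.
    exact: inPowb_le ml xz.
  rewrite supp ?jx //; apply/esym/big1_seq => z /andP[_ zL]; case: ifP => // xz.
  suff : inPowb j x by rewrite jx.
  rewrite -(subrK z x); apply: (inPowbD hF); last exact: Lj.
  by apply: inPowb_le xz; rewrite /l; lia.
have Ig : Ind g by case: kg.
suff -> : f = g by [].
apply: functional_extensionality => y; apply/eqP; rewrite -subr_eq0 addrC -mulN1r.
apply/eqP; apply: (Ind_eq0 (Ind_lincomb (-1) Ig If)) => [|x]; rewrite /lincomb mulN1r.
  by rewrite f1 g1 oppr0 addr0.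
by rewrite fg addNr.
Qed.

Definition Borel_eigen (x0 : V) := forall b, inBorel b -> rho b x0 = charP chi b *: x0.

(* Smoothness fixes x0 under small lower unipotents; conjugating by the torus
   spreads this to all of them. *)
Lemma Borel_eigen_lower x0 : Borel_eigen x0 -> forall c, rho (lower c) x0 = x0.
Proof.
move=> eig c; have [n Kn] : exists n : nat, forall h, inCongr v n h -> rho h x0 = x0.
  by case: hrho => _ _ _; apply.
have [->|c0] := eqVneq c 0; first by apply: Kn; apply: inCongr_lower; apply: inPowb0.
have [c1 [c10 vc1]] := ex_val hF (n.+1)%:Z; have one0 := oner_neq0 F.
have d0 : c / c1 != 0 by rewrite mulf_neq0 ?invr_eq0.
have -> : lower c = GL2_mul (GL2_mul (diag2 1 (c / c1)) (lower c1)) (diag2 1^-1 (c / c1)^-1).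
  by rewrite diag2_lower_conj // divr1 divfK.
have Pinv : inBorel (diag2 1^-1 (c / c1)^-1) by apply: inBorel_diag2; rewrite ?invr_eq0.
rewrite !rhoM (eig _ Pinv) rhoZ Kn; last by apply: inCongr_lower; rewrite -vc1 inPowb_v.
rewrite rhoZ (eig _ (inBorel_diag2 one0 d0)) scalerA !charP_diag2 ?invr_eq0 //.
by rewrite mulrC chiMV // scale1r.
Qed.

Lemma Borel_eigen_weyl x0 : Borel_eigen x0 -> rho weyl x0 = x0.
Proof.
move=> eig; have upper_fix y : rho (upper y) x0 = x0.
  by rewrite (eig _ (inBorel_upper y)) charP_upper scale1r.
by rewrite weyl_decomp !rhoM !upper_fix Borel_eigen_lower.
Qed.

(* w normalises the torus, swapping the entries: this forces chi = chi^s on x0. *)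
Lemma Borel_eigen_eq0 x0 : Borel_eigen x0 -> x0 = 0.
Proof.
move=> eig; have [a [d [a0 d0 chi_ad]]] := hs.
have := congr1 (fun g => rho g x0) (weyl_diag2 a0 d0); rewrite /= !rhoM.
rewrite (eig _ (inBorel_diag2 a0 d0)) rhoZ Borel_eigen_weyl //.
rewrite (eig _ (inBorel_diag2 d0 a0)).
rewrite !charP_diag2 // => /eqP; rewrite -subr_eq0 -scalerBl scaler_eq0 subr_eq0.
by rewrite (negPf chi_ad) => /eqP.
Qed.

Lemma phi_eq0_of_ker_vanishing :
  (forall f, Ind f -> f one = 0 -> phi f = 0) -> forall f, Ind f -> phi f = 0.
Proof.
move=> ker_vanish f If; apply: Borel_eigen_eq0 => b Pb.
have Ifb : Ind (rtrans b f) by apply: Ind_rtrans.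
have fb1 : lincomb (- charP chi b) f (rtrans b f) one = 0.
  by rewrite /lincomb /rtrans GL2_mul1g (Ind_borel If Pb); ring.
have := ker_vanish _ (Ind_lincomb (- charP chi b) If Ifb) fb1.
by rewrite phi_lincomb // phi_rtrans // scaleNr addrC => /eqP; rewrite subr_eq0 => /eqP.
Qed.

Lemma ker_eq0 : (exists2 f, Ind f & phi f != 0) -> forall h, in_ker h -> forall g, h g = 0.
Proof.
move=> [f If phif] h kh g; apply/eqP/negPn/negP => hg.
have [h' [kh' h'1 nz']] := ker_vanishing_at1 kh (ex_intro _ g hg).
have [j [e [c [ke e1 c0 e_ind]]]] := ker_ball_indicator kh' h'1 nz'.
have balls l z := ker_ball_translate l z ke e1 c0 e_ind.
move/eqP: phif; apply; apply: phi_eq0_of_ker_vanishing If => f' If' f'1.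
by case: (ker_vanishing balls If' f'1).
Qed.

Lemma phi_inj : (exists2 f, Ind f & phi f != 0) ->
  forall f1 f2, Ind f1 -> Ind f2 -> phi f1 = phi f2 -> f1 = f2.
Proof.
move=> nz f1 f2 If1 If2 e; apply: functional_extensionality => g.
apply/eqP; rewrite -subr_eq0; apply/eqP; rewrite -mulN1r addrC.
apply: (ker_eq0 nz (h := lincomb (-1) f2 f1)); split; first exact: Ind_lincomb.
by rewrite phi_lincomb // e scaleN1r addNr.
Qed.

End Kernel.

Theorem corollary5p2 (p : nat) (F : fieldType) (v : F -> int)
    (hF : nonarch_local_field p v)
    (k : closedFieldType) (hk : is_alg_closure_Fp k p)
    (chi : F -> F -> k) (hchi : smooth_char v chi) (hs : char_ne_swap chi)
    (V : lmodType k) (rho : GL2 F -> V -> V) (hrho : smooth_rep v rho)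
    (phi : (GL2 F -> k) -> V) (hphi : is_HomP v chi rho phi)
    (hnz : exists2 f, in_Ind v chi f & phi f != 0) :
  forall f1 f2, in_Ind v chi f1 -> in_Ind v chi f2 -> phi f1 = phi f2 -> f1 = f2.
Proof. by move=> f1 f2; apply: (phi_inj hF (proj1 hk) hchi hs hrho hphi hnz). Qed.
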